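(* Let $n\ge2$ and let $A$ be an $n\times n$ binary matrix with zero diagonal. The facets-pairing structure $\mathcal{F}_A$ on $\mathcal{C}^n$ is perfect if and only if $A$ is a Bott matrix.
   Context: $\mathcal{C}^n=\{x\in\mathbb{R}^n: -\tfrac14\le x_i\le\tfrac14\}$; $\mathbf{F}(i)$, $\mathbf{F}(-i)$ ($1\le i\le n$) are the facets in $\{x_i=\tfrac14\}$, $\{x_i=-\tfrac14\}$. Binary matrices have entries in $\mathbb{Z}_2$; $A^i_k$ denotes the $(i,k)$ entry viewed as $0$ or $1$. A Bott matrix is a binary square matrix conjugate by a permutation matrix to a strictly upper triangular binary matrix. $\mathcal{F}_A$ pairs $\mathbf{F}(j)$ with $\mathbf{F}(-j)$ via $\tau^A_j:\mathbf{F}(j)\to\mathbf{F}(-j)$, $\tau^A_j(x)=y$ with $y_{|j|}=-x_{|j|}$ and $y_k=(-1)^{A^{|j|}_k}x_k$ for $k\ne|j|$. A composition $\tau^A_{k_m}\circ\dots\circ\tau^A_{k_1}$ applied to a proper face $f$ is valid if $f\subset\mathbf{F}(k_1)$ and $\tau^A_{k_i}\circ\dots\circ\tau^A_{k_1}(f)\subset\mathbf{F}(k_{i+1})$ for $1\le i<m$ ($m=0$ allowed). The face family $\widehat f$ is the set of faces $\tau^A_{k_m}\circ\dots\circ\tau^A_{k_1}(f)$ over all valid compositions. $\mathcal{F}_A$ is perfect if for every proper face $f$ of codimension $s$, $\widehat f$ has exactly $2^s$ elements. *)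

From HB Require Import structures.
From mathcomp Require Import all_boot all_order all_algebra all_fingroup.
Set Implicit Arguments. Unset Strict Implicit. Unset Printing Implicit Defensive.
Import GRing.Theory.
Local Open Scope ring_scope.

(* A face of C^n = [-1/4,1/4]^n is encoded by its sign vector:
   f k = None        : coordinate k is free in [-1/4,1/4];
   f k = Some true   : coordinate k is fixed to  1/4;
   f k = Some false  : coordinate k is fixed to -1/4.
   The face f is the set { x | forall k, f k = Some b -> x_k = (if b then 1/4 else -1/4) }.
   (The whole cube is the face with all coordinates free.) *)
Definition face (n : nat) := {ffun 'I_n -> option bool}.

Definition codim n (f : face n) : nat := #|[set k | f k != None]|.

Definition proper_face n (f : face n) : bool := (0 < codim f)%N.

(* Facet index j in {±1,...,±n}: encoded as (|j|, sign j), sign true = +. *)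
Definition facet_idx (n : nat) := ('I_n * bool)%type.

Definition in_facet n (f : face n) (j : facet_idx n) : bool := f j.1 == Some j.2.

(* Image of a face contained in F(j) under tau^A_j :
   y_{|j|} = - x_{|j|},  y_k = (-1)^{A^{|j|}_k} x_k  (k <> |j|). *)
Definition tau_face n (A : 'M['F_2]_n) (j : facet_idx n) (f : face n) : face n :=
  [ffun k => if k == j.1 then omap negb (f k)
             else if A j.1 k == 1 then omap negb (f k) else f k].

(* Apply the composition tau_{k_m} o ... o tau_{k_1} (ks = [k_1;...;k_m]) to f;
   returns None if the composition is not valid. *)
Fixpoint apply_seq n (A : 'M['F_2]_n) (f : face n) (ks : seq (facet_idx n)) : option (face n) :=
  match ks with
  | [::] => Some f
  | j :: ks' => if in_facet f j then apply_seq A (tau_face A j f) ks' else None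
  end.

Definition in_family n (A : 'M['F_2]_n) (f g : face n) : Prop :=
  exists ks : seq (facet_idx n), apply_seq A f ks = Some g.

Definition perfect n (A : 'M['F_2]_n) : Prop :=
  forall f : face n, proper_face f ->
    exists S : {set face n}, (forall g, g \in S <-> in_family A f g) /\ #|S| = (2 ^ codim f)%N.

Definition strictly_upper n (B : 'M['F_2]_n) : bool :=
  [forall i : 'I_n, forall j : 'I_n, (j <= i)%N ==> (B i j == 0)].

Definition bott_matrix n (A : 'M['F_2]_n) : Prop :=
  exists s : 'S_n, strictly_upper (perm_mx s *m A *m invmx (perm_mx s)).

Definition zero_diag n (A : 'M['F_2]_n) : bool := [forall i : 'I_n, A i i == 0].

From mathcomp Require Import all_boot all_order all_algebra all_fingroup.
From mathcomp Require Import zify.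
Set Implicit Arguments. Unset Strict Implicit. Unset Printing Implicit Defensive.
Import GRing.Theory.
Local Open Scope ring_scope.

(* Write x -> y when A x y = 1; A is a Bott matrix exactly when this digraph
   is acyclic, a topological order being the conjugating permutation.  The
   moves never change which coordinates of a face are fixed, so the family of
   a face of codimension s lies among the 2^s faces with the same fixed
   coordinates.  If the digraph is acyclic, each of these is reached by
   correcting the fixed coordinates in topological order, since a move at x
   only flips x and the successors of x.  If there is a cycle, a shortest one
   yields a nonempty set C of vertices each having an odd number of
   successors in C; a move then flips an even number of coordinates in C, so
   the parity of the coordinates equal to 1/4 over C is invariant and the
   family of the face fixing C to 1/4 has fewer than 2^|C| elements. *)

Definition adj n (A : 'M['F_2]_n) : rel 'I_n := fun x y => A x y == 1.

Lemma F2_eq0_or_eq1 (x : 'F_2) : x = 0 \/ x = 1.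
Proof. by case: x => [[|[|m]]] //= lt_m; [left|right]; apply: val_inj. Qed.

Lemma invmx_perm_mx (R : comUnitRingType) n (s : 'S_n) :
  invmx (perm_mx s) = perm_mx s^-1 :> 'M[R]_n.
Proof.
have perm_mxVK : perm_mx s^-1 *m perm_mx s = 1%:M :> 'M[R]_n.
  by rewrite -perm_mxM mulVg perm_mx1.
by rewrite -[RHS]mulmx1 -(mulmxV (unitmx_perm _ s)) mulmxA perm_mxVK mul1mx.
Qed.

Lemma perm_mx_conjE (R : comUnitRingType) n (A : 'M[R]_n) (s : 'S_n) i j :
  (perm_mx s *m A *m invmx (perm_mx s)) i j = A (s i) (s j).
Proof. by rewrite invmx_perm_mx -row_permE -col_permE !mxE. Qed.

Lemma bott_matrixP n (A : 'M['F_2]_n) :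
  bott_matrix A <-> exists s : 'S_n, forall x y, adj A x y -> (s x < s y)%N.
Proof.
split=> [[s /forallP upper_A] | [s adj_lt]].
  exists s^-1%g => x y Axy; rewrite ltnNge; apply/negP => le_yx.
  have /forallP /(_ (s^-1 y)%g) /implyP /(_ le_yx) := upper_A (s^-1 x)%g.
  by rewrite perm_mx_conjE !permKV (eqP Axy).
exists s^-1%g; apply/forallP => i; apply/forallP => j; apply/implyP => le_ji.
rewrite perm_mx_conjE.
case: (F2_eq0_or_eq1 (A (s^-1 i)%g (s^-1 j)%g)) => [-> // | /eqP Aij].
by have := adj_lt _ _ Aij; rewrite !permKV ltnNge le_ji.
Qed.

Lemma perm_of_key n (key : 'I_n -> nat) :
  exists s : 'S_n, forall x y, (key x < key y)%N -> (s x < s y)%N.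
Proof.
pose key' x := (key x * n + x)%N.
have key'_inj : injective key'.
  move=> x y /(congr1 (modn^~ n)); rewrite !modnMDl !modn_small //.
  exact: val_inj.
pose below x := [set y | (key' y < key' x)%N].
have below_mono x y : (key' x < key' y)%N -> (#|below x| < #|below y|)%N.
  move=> lt_xy; apply: proper_card; apply/properP; split.
    by apply/subsetP => z; rewrite !inE => /ltn_trans; apply.
  by exists x; rewrite !inE ?ltnn.
have below_lt x : (#|below x| < n)%N.
  rewrite -[X in (_ < X)%N]card_ord -cardsT; apply: proper_card; rewrite properT.
  by apply/eqP => /setP /(_ x); rewrite !inE ltnn.
have rank_inj : injective (fun x => Ordinal (below_lt x)).
  move=> x y /(congr1 val) /= eq_xy; apply: key'_inj.
  by case: (ltngtP (key' x) (key' y)) => // /below_mono; rewrite eq_xy ltnn.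
exists (perm rank_inj) => x y lt_xy; rewrite !permE /=; apply: below_mono.
by rewrite /key'; have := ltn_ord x; have := ltn_ord y; nia.
Qed.

Definition acyclic (T : finType) (e : rel T) := forall x y, e x y -> ~~ connect e y x.

Definition ancestors (T : finType) (e : rel T) (y : T) :=
  [set x | [exists z, e x z && connect e z y]].

Lemma ancestors_proper (T : finType) (e : rel T) x y :
  acyclic e -> e x y -> ancestors e x \proper ancestors e y.
Proof.
move=> acyc_e exy; apply/properP; split.
  apply/subsetP => z; rewrite !inE => /existsP [w /andP [ezw cwx]].
  by apply/existsP; exists w; rewrite ezw (connect_trans cwx) ?connect1.
exists x; first by rewrite inE; apply/existsP; exists y; rewrite exy connect0.
by rewrite inE; apply/existsP => -[w /andP [exw]]; apply/negP; apply: acyc_e.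
Qed.

Lemma bott_of_acyclic n (A : 'M['F_2]_n) : acyclic (adj A) -> bott_matrix A.
Proof.
move=> acyc_A; have [s key_lt] := perm_of_key (fun x => #|ancestors (adj A) x|).
apply/bott_matrixP; exists s => x y Axy; apply: key_lt.
exact/proper_card/ancestors_proper.
Qed.

Definition supp n (f : face n) : {set 'I_n} := [set k | f k != None].

Lemma in_supp n (f : face n) k : (k \in supp f) = (f k != None).
Proof. by rewrite inE. Qed.

Lemma supp_tau n (A : 'M['F_2]_n) j (f : face n) : supp (tau_face A j f) = supp f.
Proof.
by apply/setP => k; rewrite !in_supp ffunE; do 2?case: ifP => _; case: (f k).
Qed.

Lemma in_family_supp n (A : 'M['F_2]_n) (f g : face n) :
  in_family A f g -> supp g = supp f.
Proof.
case=> ks; elim: ks f => [|j ks IH] f /=; first by case=> ->.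
by case: ifP => // _ /IH ->; rewrite supp_tau.
Qed.

Lemma in_family_tau n (A : 'M['F_2]_n) j (f g : face n) :
  in_facet f j -> in_family A (tau_face A j f) g -> in_family A f g.
Proof. by move=> f_j [ks tau_ks]; exists (j :: ks); rewrite /= f_j. Qed.

Definition faces_with_supp n (D : {set 'I_n}) : {set face n} :=
  [set g : face n | supp g == D].

Lemma card_faces_with_supp n (D : {set 'I_n}) :
  #|faces_with_supp D| = (2 ^ #|D|)%N.
Proof.
pose F k : pred (option bool) :=
  if k \in D then [pred o | o != None] else [pred o | o == None].
have -> : faces_with_supp D = [set g : face n | g \in family F].
  apply/setP => g; rewrite !inE; apply/eqP/familyP => [eq_D k | g_F].
    by rewrite /F -eq_D in_supp; case: (g k).
  by apply/setP => k; have := g_F k; rewrite /F in_supp; case: (k \in D); case: (g k).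
rewrite cardsE card_family foldrE big_image /=.
transitivity (\prod_(k < n) (if k \in D then 2 else 1))%N.
  apply: eq_bigr => k _; rewrite /F; case: (k \in D).
    rewrite (@eq_card _ _ [pred o | o \in [:: Some true; Some false]]).
      exact/card_uniqP.
    by case=> [[]|].
  by rewrite (@eq_card _ _ (pred1 None)) ?card1.
by rewrite -big_mkcond prod_nat_const.
Qed.

Lemma in_family_of_agree n (A : 'M['F_2]_n) (s : 'S_n) :
  (forall x y, adj A x y -> (s x < s y)%N) ->
  forall d (f g : face n), supp g = supp f ->
    (forall k, (s k < n - d)%N -> f k = g k) -> in_family A f g.
Proof.
move=> adj_lt; elim=> [|d IH] f g eq_supp agree.
  by exists [::]; congr Some; apply/ffunP => k; rewrite agree // subn0.
have [le_nd | lt_dn] := leqP n d.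
  by apply: IH => // k lt_k; apply: agree; lia.
have lt_tn : (n - d.+1 < n)%N by lia.
pose k0 := (s^-1 (Ordinal lt_tn))%g.
have s_k0 : s k0 = (n - d.+1)%N :> nat by rewrite permKV.
have agree_next k : (s k < n - d)%N -> (s k < n - d.+1)%N \/ k = k0.
  move=> lt_k; have [|eq_k] := ltnP (s k) (n - d.+1); first by left.
  right; apply: (@perm_inj _ s); apply: val_inj; rewrite /= permKV /=; lia.
have [eq_k0 | neq_k0] := eqVneq (f k0) (g k0).
  by apply: IH => // k /agree_next [/agree // | ->].
have supp_k0 : (g k0 != None) = (f k0 != None) by rewrite -!in_supp eq_supp.
case f_k0: (f k0) neq_k0 supp_k0 => [b|]; case g_k0: (g k0) => [c|] //= neq_bc _.
apply: (@in_family_tau _ _ (k0, b)); first by rewrite /in_facet f_k0.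
apply: IH; first by rewrite supp_tau.
move=> k /agree_next [lt_k | ->]; last first.
  by rewrite ffunE eqxx f_k0 g_k0; move: neq_bc; case: (b); case: (c).
rewrite ffunE /=; case: eqP => [eq_k | _]; first by move: lt_k; rewrite eq_k; lia.
case: ifP => [/adj_lt | _]; [lia | exact: agree].
Qed.

Lemma perfect_of_bott n (A : 'M['F_2]_n) : bott_matrix A -> perfect A.
Proof.
case/bott_matrixP => s adj_lt f _; exists (faces_with_supp (supp f)).
split; last exact: card_faces_with_supp.
move=> g; rewrite inE; split => [/eqP eq_supp | /in_family_supp -> //].
by apply: (in_family_of_agree adj_lt (d := n)) => // k; rewrite subnn.
Qed.

Definition parity n (C : {set 'I_n}) (g : face n) : 'F_2 :=
  \sum_(k in C) (g k == Some true)%:R.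

Definition odd_outdeg n (A : 'M['F_2]_n) (C : {set 'I_n}) : bool :=
  [forall x in C, \sum_(k in C) A x k == 1].

Section Parity.
Variables (n : nat) (A : 'M['F_2]_n) (C : {set 'I_n}).
Hypotheses (zero_diag_A : zero_diag A) (odd_C : odd_outdeg A C).

Lemma parity_tau (f : face n) j :
  supp f = C -> in_facet f j -> parity C (tau_face A j f) = parity C f.
Proof.
move=> supp_f /eqP f_j; have jC : j.1 \in C by rewrite -supp_f in_supp f_j.
have tau_k k : k \in C -> (tau_face A j f k == Some true)%:R =
    (f k == Some true)%:R + ((k == j.1)%:R + A j.1 k) :> 'F_2.
  rewrite -supp_f in_supp ffunE; case: (f k) => // b _.
  have [-> | _] := eqVneq k j.1.
    by rewrite (eqP (forallP zero_diag_A j.1)); case: b; apply: val_inj.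
  by case: (F2_eq0_or_eq1 (A j.1 k)) => ->; case: b; apply: val_inj.
rewrite /parity (eq_bigr _ tau_k) big_split /= big_split /=.
have -> : \sum_(k in C) (k == j.1)%:R = 1 :> 'F_2.
  rewrite (bigD1 j.1) //= eqxx big1 ?addr0 //.
  by move=> k /andP [_ /negbTE ->].
rewrite (eqP (forall_inP odd_C _ jC)).
by rewrite (addrr_pchar2 (pchar_Fp (isT : prime 2))) addr0.
Qed.

Lemma parity_in_family (f g : face n) :
  supp f = C -> in_family A f g -> parity C g = parity C f.
Proof.
move=> supp_f [ks]; elim: ks f supp_f => [|j ks IH] f supp_f /=; first by case=> ->.
case: ifP => // f_j /IH ->; first exact: parity_tau.
by rewrite supp_tau.
Qed.

Lemma not_perfect_of_odd_outdeg : C != set0 -> ~ perfect A.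
Proof.
case/set0Pn => x0 x0C perfect_A.
pose f0 : face n := [ffun k => if k \in C then Some true else None].
have supp_f0 : supp f0 = C.
  by apply/setP => k; rewrite in_supp ffunE; case: (k \in C).
pose g0 : face n := [ffun k => if k == x0 then Some false else f0 k].
have supp_g0 : supp g0 = C.
  apply/setP => k; rewrite in_supp ffunE.
  by have [-> | _] := eqVneq k x0; [rewrite x0C | rewrite -in_supp supp_f0].
have parity_g0 : parity C g0 != parity C f0.
  rewrite /parity (bigD1 x0) //= [in X in _ != X](bigD1 x0) //= !ffunE eqxx x0C /=.
  rewrite (eq_bigr (fun k => (f0 k == Some true)%:R)); last first.
    by move=> k /andP [_ /negbTE x0k]; rewrite ffunE x0k.
  by rewrite (inj_eq (addIr _)) eq_sym oner_neq0.
have codim_f0 : codim f0 = #|C| by rewrite -supp_f0.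
have proper_f0 : proper_face f0.
  by rewrite /proper_face codim_f0 card_gt0; apply/set0Pn; exists x0.
have [S [S_family card_S]] := perfect_A f0 proper_f0.
have : S \subset faces_with_supp C :\ g0.
  apply/subsetP => g /S_family fam_g.
  rewrite !inE (in_family_supp fam_g) supp_f0 eqxx andbT.
  by apply: contra parity_g0 => /eqP <-; rewrite (parity_in_family supp_f0 fam_g).
have g0_in : g0 \in faces_with_supp C by rewrite inE supp_g0.
rewrite codim_f0 -card_faces_with_supp in card_S.
by move/subset_leq_card; rewrite card_S (cardsD1 g0 (faces_with_supp C)) g0_in ltnn.
Qed.

End Parity.

Lemma cycle_shortcut (T : eqType) (e : rel T) x q1 k q2 :
  path.cycle e (x :: q1 ++ k :: q2) -> e x k -> path.cycle e (x :: k :: q2).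
Proof.
by rewrite /= rcons_cat /= cat_path => /andP [_ /= /andP [_ ->]] ->.
Qed.

Lemma odd_outdeg_of_cycle n (A : 'M['F_2]_n) (c : seq 'I_n) :
  zero_diag A -> path.cycle (adj A) c -> c != [::] ->
  exists2 C : {set 'I_n}, C != set0 & odd_outdeg A C.
Proof.
move=> zero_diag_A; have adj_irr x : adj A x x = false.
  by rewrite /adj (eqP (forallP zero_diag_A x)).
elim: {c}(size c) {-2}c (leqnn (size c)) => [|m IH] c.
  by rewrite leqn0 size_eq0 => ->.
move=> size_c cycle_c c_nil; pose C := [set k in c].
have [odd_C | /forall_inPn [x]] := boolP (odd_outdeg A C).
  exists C => //; apply/set0Pn; case: c c_nil @C {size_c cycle_c odd_C} => // a c _.
  by exists a; rewrite inE mem_head.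
rewrite inE => /rot_to [i q rot_c] sum_x.
have mem_C k : (k \in C) = (k \in x :: q) by rewrite inE -rot_c mem_rot.
have size_xq : size (x :: q) = size c by rewrite -rot_c size_rot.
have : path.cycle (adj A) (x :: q) by rewrite -rot_c rot_cycle.
clear rot_c; case: q mem_C size_xq => [|nx q] mem_C size_xq.
  by rewrite /= adj_irr.
move=> cycle_xq; have /andP [Axnx _] := cycle_xq.
have [k kC /andP [k_nx Axk]] : exists2 k, k \in C & (k != nx) && adj A x k.
  apply/exists_inP; apply: contraR sum_x => /exists_inPn other_k.
  have nxC : nx \in C by rewrite mem_C !inE eqxx orbT.
  rewrite (bigD1 nx) //= (eqP Axnx) big1 ?addr0 // => k /andP [kC k_nx].
  have := other_k k kC; rewrite k_nx /adj /=.
  by case: (F2_eq0_or_eq1 (A x k)) => ->.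
have k_q : k \in q.
  move: kC; rewrite mem_C !inE (negbTE k_nx) /=.
  by move: Axk; have [-> | //] := eqVneq k x; rewrite adj_irr.
move: cycle_xq size_xq; case/splitPr: k_q => q1 q2 cycle_xq size_xq.
apply: (IH (x :: k :: q2)) => //; last exact: (@cycle_shortcut _ _ x (nx :: q1)) Axk.
by move: size_c; rewrite -size_xq /= size_cat /=; lia.
Qed.

Lemma acyclic_of_perfect n (A : 'M['F_2]_n) :
  zero_diag A -> perfect A -> acyclic (adj A).
Proof.
move=> zero_diag_A perfect_A x y Axy; apply/negP => /connectP [p path_p x_last].
have cycle_yp : path.cycle (adj A) (y :: p) by rewrite /= rcons_path path_p -x_last.
have [C C_nonempty odd_C] := odd_outdeg_of_cycle zero_diag_A cycle_yp isT.
exact: not_perfect_of_odd_outdeg odd_C C_nonempty perfect_A.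
Qed.

Theorem mainTheorem12 (n : nat) (A : 'M['F_2]_n) :
  (2 <= n)%N -> zero_diag A -> (perfect A <-> bott_matrix A).
Proof.
move=> _ zero_diag_A; split; last exact: perfect_of_bott.
by move=> perfect_A; apply/bott_of_acyclic/acyclic_of_perfect.
Qed.
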